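(* Let $p/q$ be a rational number. For real $\varepsilon\neq0$ small, let $z_\varepsilon$ be a point of $\mathcal C_{p/q}(p/q+\varepsilon)$ and $Q_\varepsilon(w)=\frac{1}{z_\varepsilon}P_{p/q+\varepsilon}(z_\varepsilon w)$. Then $$Q_\varepsilon^{\circ q}(w)=w+2i\pi q\varepsilon\, w(1-w^q)+\varepsilon R_\varepsilon(w),$$ where $R_\varepsilon\to0$ uniformly on compact subsets of $\mathbb C$ as $\varepsilon\to0$.
   Context: $P_\alpha(z)=e^{2i\pi\alpha}z+z^2$. The cycle $\mathcal C_{p/q}(\alpha)$: with $\zeta=e^{2i\pi p/q}$ there is an analytic $\chi_{p/q}:B(0,q^{-3/q})\to\mathbb C$, $\chi_{p/q}(0)=0$, such that for $\delta\ne0$, $\chi_{p/q}(\delta)\neq0$ and $\{\chi_{p/q}(\zeta^k\delta)\}_{0\le k<q}$ is a cycle of period $q$ of $P_{p/q+\delta^q}$; $\mathcal C_{p/q}(\alpha)=\chi_{p/q}(\{\delta:\delta^q=\alpha-p/q\})$ for $|\alpha-p/q|<1/q^3$. *)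

From Stdlib Require Import Reals ZArith.
From Coquelicot Require Import Coquelicot.
Open Scope R_scope.

Definition cexp (z : C) : C :=
  (exp (fst z) * cos (snd z), exp (fst z) * sin (snd z)).

(* P_alpha(z) = e^{2 i pi alpha} z + z^2 (alpha complex, needed for alpha = p/q + delta^q) *)
Definition Pmap (alpha : C) (z : C) : C :=
  Cplus (Cmult (cexp (Cmult (Cmult (RtoC (2 * PI)) Ci) alpha)) z) (Cmult z z).

Definition zeta (p : Z) (q : nat) : C :=
  cexp (Cmult (Cmult (RtoC (2 * PI)) Ci) (RtoC (IZR p / INR q))).

Definition chi_radius (q : nat) : R := Rpower (INR q) (- (3 / INR q)).

(* chi is a parametrisation chi_{p/q} as in the context: analytic (complex
   differentiable) on B(0, q^{-3/q}), chi(0)=0, and for delta <> 0 in the ball,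
   chi(delta) <> 0 and (chi(zeta^k delta))_{0<=k<q} is a cycle of exact period q
   of P_{p/q + delta^q}. *)
Definition is_chi (p : Z) (q : nat) (chi : C -> C) : Prop :=
  (forall d : C, Cmod d < chi_radius q ->
     ex_derive (K := C_AbsRing) (V := C_NormedModule) chi d) /\
  chi (RtoC 0) = RtoC 0 /\
  (forall d : C, 0 < Cmod d < chi_radius q ->
     chi d <> RtoC 0 /\
     (forall k : nat, (k < q)%nat ->
        Pmap (Cplus (RtoC (IZR p / INR q)) (Cpow d q))
             (chi (Cmult (Cpow (zeta p q) k) d))
        = chi (Cmult (Cpow (zeta p q) (S k)) d)) /\
     (forall i j : nat, (i < q)%nat -> (j < q)%nat ->
        chi (Cmult (Cpow (zeta p q) i) d) = chi (Cmult (Cpow (zeta p q) j) d) ->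
        i = j)).

Definition cycle_set (p : Z) (q : nat) (chi : C -> C) (alpha : R) (z : C) : Prop :=
  exists d : C, Cmod d < chi_radius q /\
    Cpow d q = RtoC (alpha - IZR p / INR q) /\ z = chi d.

Definition Qmap (p : Z) (q : nat) (eps : R) (z : C) (w : C) : C :=
  Cmult (Cinv z) (Pmap (RtoC (IZR p / INR q + eps)) (Cmult z w)).

(* R_eps(w), defined by Q_eps^q(w) = w + 2 i pi q eps w (1 - w^q) + eps R_eps(w) *)
Definition Rrem (p : Z) (q : nat) (eps : R) (z : C) (w : C) : C :=
  Cdiv (Cminus (Cminus (Nat.iter q (Qmap p q eps z) w) w)
               (Cmult (Cmult (Cmult (RtoC (2 * PI * INR q * eps)) Ci) w)
                      (Cminus (RtoC 1) (Cpow w q))))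
       (RtoC eps).

(* Write [quad l u = l u + u^2], so that [P_alpha = quad (e^(2 i pi alpha))], and let [l0 = zeta]
   be the primitive [q]-th root of unity.  Since [quad l0] commutes with its [q]-th iterate, the
   coefficients of [u^2, ..., u^q] in that iterate vanish:
   [quad l0]^q (u) = u + u^(q+1) r(u) with [r] polynomial.  For [lam = l0 e^(2 i pi eps)],
   [quad lam]^q (u) = lam^q u + u^2 V(lam, u) with [V] Lipschitz in [lam], so
   [V(lam, .) - V(l0, .) = O(eps)] on the unit disk.  The cycle point [z = chi(d)], [d^q = eps],
   has [|z| = O(|d|)] and its periodicity gives [lam^q - 1 = - z V(lam, z)].  Substituting into
   [Q^q(w) = lam^q w + z w^2 V(lam, z w)] leaves only terms of size
   [O(eps^2 + |z| |eps| + |z|^(q+1)) = O(|d| |eps|)], hence [R_eps = O(|eps|^(1/q))]. *)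

From Stdlib Require Import Reals ZArith Lia Lra.
From Coquelicot Require Import Coquelicot.
Open Scope R_scope.

Section Estimates.
Local Open Scope C_scope.

Lemma pow_lt_reg_l (a b : R) n : 0 <= a -> 0 <= b -> a ^ n < b ^ n -> a < b.
Proof.
  intros Ha Hb H; destruct (Rlt_le_dec a b) as [|Hba]; [assumption|].
  pose proof (pow_incr b a n (conj Hb Hba)); lra.
Qed.

Lemma pow_le_self (x : R) n : 0 <= x <= 1 -> (0 < n)%nat -> x ^ n <= x.
Proof.
  intros Hx Hn; destruct n as [|n]; [lia|]; simpl.
  pose proof (pow_incr x 1 n Hx) as H; rewrite pow1 in H; nra.
Qed.

Lemma Cmod_sub_le (a b : C) : (Cmod (a - b) <= Cmod a + Cmod b)%R.
Proof. unfold Cminus; rewrite <- (Cmod_opp b); apply Cmod_triangle. Qed.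

Lemma Cmod_le_Rabs_add (a b : R) : (Cmod (a, b) <= Rabs a + Rabs b)%R.
Proof.
  replace (a, b) with (RtoC a + RtoC b * Ci) by (unfold RtoC, Ci, Cplus, Cmult; simpl; f_equal; ring).
  eapply Rle_trans; [apply Cmod_triangle|].
  rewrite Cmod_mult, !Cmod_R, Cmod_Ci; lra.
Qed.

Lemma Cmod_mult_le (a b : C) (x y : R) : (Cmod a <= x)%R -> (Cmod b <= y)%R ->
  (Cmod (a * b) <= x * y)%R.
Proof. intros Ha Hb; rewrite Cmod_mult; apply Rmult_le_compat; auto using Cmod_ge_0. Qed.

End Estimates.

Section PolynomialFunctions.
Local Open Scope C_scope.
Implicit Types (f g : C -> C) (c u : C).

Inductive poly_fun : (C -> C) -> Prop :=
  | poly_fun_zero (f : C -> C) : (forall u, f u = 0) -> poly_fun f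
  | poly_fun_horner (f : C -> C) (c : C) (g : C -> C) :
      poly_fun g -> (forall u, f u = c + u * g u) -> poly_fun f.

Lemma poly_fun_ext f g : poly_fun f -> (forall u, g u = f u) -> poly_fun g.
Proof.
  intros [f0 Hf | f0 c h Hh Hf] E.
  - apply poly_fun_zero; intros u; rewrite E; auto.
  - apply (poly_fun_horner _ c h Hh); intros u; rewrite E; auto.
Qed.

Lemma poly_fun_const c : poly_fun (fun _ => c).
Proof.
  apply (poly_fun_horner _ c (fun _ => 0)); [now apply poly_fun_zero | intros; ring].
Qed.

Lemma poly_fun_id : poly_fun (fun u => u).
Proof.
  apply (poly_fun_horner _ 0 (fun _ => 1)); [apply poly_fun_const | intros; ring].
Qed.

Lemma poly_fun_add f g : poly_fun f -> poly_fun g -> poly_fun (fun u => f u + g u).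
Proof.
  intros Hf; revert g; induction Hf as [f Ef | f c f1 Hf1 IH Ef]; intros g Hg.
  - apply (poly_fun_ext _ _ Hg); intros u; rewrite Ef; ring.
  - destruct Hg as [g Eg | g d g1 Hg1 Eg].
    + apply (poly_fun_horner _ c f1 Hf1); intros u; rewrite Ef, Eg; ring.
    + apply (poly_fun_horner _ (c + d) _ (IH _ Hg1)); intros u; rewrite Ef, Eg; ring.
Qed.

Lemma poly_fun_scal c g : poly_fun g -> poly_fun (fun u => c * g u).
Proof.
  induction 1 as [g Eg | g d g1 Hg1 IH Eg].
  - apply poly_fun_zero; intros u; rewrite Eg; ring.
  - apply (poly_fun_horner _ (c * d) _ IH); intros u; rewrite Eg; ring.
Qed.

Lemma poly_fun_mul f g : poly_fun f -> poly_fun g -> poly_fun (fun u => f u * g u).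
Proof.
  intros Hf Hg; induction Hf as [f Ef | f c f1 Hf1 IH Ef].
  - apply poly_fun_zero; intros u; rewrite Ef; ring.
  - apply (poly_fun_ext _ _ (poly_fun_add _ _ (poly_fun_scal c g Hg)
                                        (poly_fun_horner _ 0 _ IH (fun u => eq_refl))));
      intros u; rewrite Ef; ring.
Qed.

Lemma poly_fun_comp f g : poly_fun f -> poly_fun g -> poly_fun (fun u => f (g u)).
Proof.
  intros Hf Hg; induction Hf as [f Ef | f c f1 Hf1 IH Ef].
  - apply poly_fun_zero; intros u; apply Ef.
  - apply (poly_fun_ext _ _ (poly_fun_add _ _ (poly_fun_const c) (poly_fun_mul _ _ Hg IH))).
    intros u; apply Ef.
Qed.

Lemma poly_fun_pow f n : poly_fun f -> poly_fun (fun u => f u ^ n).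
Proof.
  intros Hf; induction n as [|n IH]; simpl; [apply poly_fun_const | exact (poly_fun_mul _ _ Hf IH)].
Qed.

Lemma poly_fun_opp f : poly_fun f -> poly_fun (fun u => - f u).
Proof.
  intros Hf; apply (poly_fun_ext _ _ (poly_fun_scal (-1) _ Hf)); intros u; ring.
Qed.

Lemma poly_fun_bounded f R : poly_fun f ->
  exists M, (0 <= M)%R /\ forall u, (Cmod u <= R)%R -> (Cmod (f u) <= M)%R.
Proof.
  induction 1 as [f Ef | f c g Hg [M [HM0 HM]] Ef].
  - exists 0%R; split; [lra|]; intros u _; rewrite Ef, Cmod_0; lra.
  - exists (Cmod c + Rabs R * M)%R; split.
    + pose proof (Cmod_ge_0 c); pose proof (Rabs_pos R); nra.
    + intros u Hu; rewrite Ef.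
      eapply Rle_trans; [apply Cmod_triangle|]; rewrite Cmod_mult.
      pose proof (HM u Hu); pose proof (Cmod_ge_0 u); pose proof (Cmod_ge_0 (g u)).
      pose proof (Rle_abs R); nra.
Qed.

Lemma poly_fun_expand0 f : poly_fun f -> exists g, poly_fun g /\ forall u, f u = f 0 + u * g u.
Proof.
  intros [f0 Ef | f0 c g Hg Ef].
  - exists (fun _ => 0); split; [apply poly_fun_const | intros u; rewrite !Ef; ring].
  - exists g; split; [exact Hg | intros u; rewrite !Ef; ring].
Qed.

Lemma poly_fun_vanishing_off0 f : poly_fun f -> (forall u, u <> 0 -> f u = 0) -> f 0 = 0.
Proof.
  intros [f0 Ef | f0 c g Hg Ef] Hoff; [apply Ef|].
  destruct (poly_fun_bounded g 1 Hg) as [M [HM0 HM]].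
  assert (Hc : forall t, (0 < t <= 1)%R -> (Cmod c <= t * M)%R).
  { intros t Ht.
    assert (Ht0 : RtoC t <> 0) by (intros E; apply RtoC_inj in E; lra).
    assert (Habs : Cmod t = t) by (rewrite Cmod_R; apply Rabs_pos_eq; lra).
    replace c with (f0 t - t * g t) by (rewrite Ef; ring).
    rewrite (Hoff _ Ht0).
    replace (0 - t * g t) with (- (t * g t)) by ring.
    rewrite Cmod_opp, Cmod_mult, Habs.
    apply Rmult_le_compat_l; [lra|]; apply HM; lra. }
  rewrite Ef, Cmult_0_l, Cplus_0_r; apply Cmod_eq_0, Rle_antisym; [|apply Cmod_ge_0].
  apply Rle_plus_epsilon; intros e He.
  set (t := Rmin 1 (e / (M + 1))).
  assert (Ht : (0 < t <= 1)%R) by (split; [apply Rmin_glb_lt; [lra | apply Rdiv_lt_0_compat; lra] | apply Rmin_l]).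
  assert (HtM : (t * (M + 1) <= e)%R).
  { apply Rle_trans with (e / (M + 1) * (M + 1))%R; [|right; field; lra].
    apply Rmult_le_compat_r; [lra | apply Rmin_r]. }
  pose proof (Hc t Ht); nra.
Qed.

End PolynomialFunctions.

Ltac poly_fun_auto :=
  repeat first [ assumption | apply poly_fun_const | apply poly_fun_id | apply poly_fun_add
               | apply poly_fun_opp | apply poly_fun_pow | apply poly_fun_mul ].

Section QuadraticFamily.
Local Open Scope C_scope.
Implicit Types (l u : C).

Definition quad l u : C := l * u + u * u.

Fixpoint quad_iter_rem (k : nat) l u : C :=
  match k with
  | O => 0
  | S k => l * quad_iter_rem k l u + (l ^ k + u * quad_iter_rem k l u) * (l ^ k + u * quad_iter_rem k l u)
  end.

Lemma quad_iterE k l u : Nat.iter k (quad l) u = l ^ k * u + u * u * quad_iter_rem k l u.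
Proof. induction k as [|k IH]; simpl; [|rewrite IH; unfold quad]; ring. Qed.

Lemma poly_fun_quad_iter_rem k l : poly_fun (quad_iter_rem k l).
Proof.
  induction k as [|k IH]; simpl; [apply poly_fun_const|].
  apply (poly_fun_ext (fun u => l * quad_iter_rem k l u
                                + (l ^ k + u * quad_iter_rem k l u) * (l ^ k + u * quad_iter_rem k l u)));
    [poly_fun_auto | reflexivity].
Qed.

(* Comparing both sides of [f (f^q u) = f^q (f u)] to the lowest order in [u]. *)
Lemma quad_iter_rem_vanish_at0 q j l W : l <> 0 -> l ^ q = 1 -> l ^ S j <> 1 -> poly_fun W ->
  (forall u, quad_iter_rem q l u = u ^ j * W u) -> W 0 = 0.
Proof.
  intros Hl Hq Hj HW EW.
  set (F := fun u => l * W u + 2 * u * W u + u * u * u ^ j * (W u * W u)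
                     - (l + u) * (l + u) * (l + u) ^ j * W (quad l u)).
  assert (HF : poly_fun F).
  { assert (poly_fun (fun u => W (quad l u))) by (apply poly_fun_comp; unfold quad; poly_fun_auto).
    unfold F; poly_fun_auto. }
  assert (Hiter : forall v, Nat.iter q (quad l) v = v + v * v * (v ^ j * W v))
    by (intros v; rewrite quad_iterE, Hq, EW; ring).
  assert (HF0 : F 0 = 0).
  { apply (poly_fun_vanishing_off0 F HF); intros u Hu.
    pose proof (Nat.iter_swap q C (quad l) u) as Hcomm.
    rewrite !Hiter in Hcomm.
    assert (Hquad : quad l u ^ j = u ^ j * (l + u) ^ j)
      by (rewrite <- Cpow_mult_l; f_equal; unfold quad; ring).
    assert (Hu2 : u * u * u ^ j <> 0) by (repeat apply Cmult_neq_0; auto; apply Cpow_nz; auto).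
    rewrite Hquad in Hcomm.
    destruct (Ceq_dec (F u) 0) as [|HFu]; [assumption | exfalso; apply (Cmult_neq_0 _ _ Hu2 HFu)].
    transitivity (quad l (u + u * u * (u ^ j * W u))
                  - (quad l u + quad l u * quad l u * (u ^ j * (l + u) ^ j * W (quad l u))));
      [unfold F, quad; ring | rewrite Hcomm; ring]. }
  assert (Hl1 : 1 - l ^ S j <> 0) by (apply Cminus_eq_contra; intros E; apply Hj; auto).
  destruct (Ceq_dec (W 0) 0) as [|HW0]; [assumption | exfalso].
  apply (Cmult_neq_0 _ _ (Cmult_neq_0 _ _ Hl HW0) Hl1).
  transitivity (F 0); [|exact HF0]; unfold F, quad; cbv beta.
  replace (l * 0 + 0 * 0) with (RtoC 0) by ring; rewrite Cplus_0_r, Cpow_S; ring.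
Qed.

Lemma quad_iter_rem_factor q l : l <> 0 -> l ^ q = 1 ->
  (forall m, (0 < m < q)%nat -> l ^ m <> 1) ->
  forall j, (j < q)%nat -> exists W, poly_fun W /\ forall u, quad_iter_rem q l u = u ^ j * W u.
Proof.
  intros Hl Hq Hprim j; induction j as [|j IH]; intros Hj.
  - exists (quad_iter_rem q l); split; [apply poly_fun_quad_iter_rem | intros u; simpl; ring].
  - destruct IH as [W [HW EW]]; [lia|].
    assert (HW0 : W 0 = 0) by (apply (quad_iter_rem_vanish_at0 q j l); auto; apply Hprim; lia).
    destruct (poly_fun_expand0 W HW) as [g [Hg Eg]].
    exists g; split; [exact Hg|]; intros u; rewrite EW, Eg, HW0; simpl; ring.
Qed.

End QuadraticFamily.

Section LipschitzInParameter.
Local Open Scope C_scope.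
Implicit Types (l u c : C) (f g : C -> C -> C).

Definition bounded_lipschitz_on_unit_disks f : Prop :=
  exists M K, (0 <= M)%R /\ (0 <= K)%R /\
  forall l l' u, (Cmod l <= 1)%R -> (Cmod l' <= 1)%R -> (Cmod u <= 1)%R ->
    (Cmod (f l u) <= M)%R /\ (Cmod (f l u - f l' u) <= K * Cmod (l - l'))%R.

Lemma bounded_lipschitz_const c : bounded_lipschitz_on_unit_disks (fun _ _ => c).
Proof.
  exists (Cmod c), 0%R; split; [apply Cmod_ge_0 | split; [lra|]].
  intros l l' u _ _ _; split; [lra|].
  replace (c - c) with (RtoC 0) by ring; rewrite Cmod_0.
  pose proof (Cmod_ge_0 (l - l')); nra.
Qed.

Lemma bounded_lipschitz_param : bounded_lipschitz_on_unit_disks (fun l _ => l).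
Proof. exists 1%R, 1%R; split; [lra | split; [lra|]]; intros l l' u Hl _ _; split; lra. Qed.

Lemma bounded_lipschitz_var : bounded_lipschitz_on_unit_disks (fun _ u => u).
Proof.
  exists 1%R, 0%R; split; [lra | split; [lra|]]; intros l l' u _ _ Hu; split; [exact Hu|].
  replace (u - u) with (RtoC 0) by ring; rewrite Cmod_0.
  pose proof (Cmod_ge_0 (l - l')); nra.
Qed.

Lemma bounded_lipschitz_add f g : bounded_lipschitz_on_unit_disks f ->
  bounded_lipschitz_on_unit_disks g -> bounded_lipschitz_on_unit_disks (fun l u => f l u + g l u).
Proof.
  intros [M1 [K1 [HM1 [HK1 H1]]]] [M2 [K2 [HM2 [HK2 H2]]]].
  exists (M1 + M2)%R, (K1 + K2)%R; split; [lra | split; [lra|]].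
  intros l l' u Hl Hl' Hu.
  destruct (H1 l l' u Hl Hl' Hu), (H2 l l' u Hl Hl' Hu); split.
  - eapply Rle_trans; [apply Cmod_triangle | lra].
  - replace (f l u + g l u - (f l' u + g l' u)) with ((f l u - f l' u) + (g l u - g l' u)) by ring.
    eapply Rle_trans; [apply Cmod_triangle | lra].
Qed.

Lemma bounded_lipschitz_mul f g : bounded_lipschitz_on_unit_disks f ->
  bounded_lipschitz_on_unit_disks g -> bounded_lipschitz_on_unit_disks (fun l u => f l u * g l u).
Proof.
  intros [M1 [K1 [HM1 [HK1 H1]]]] [M2 [K2 [HM2 [HK2 H2]]]].
  exists (M1 * M2)%R, (M1 * K2 + K1 * M2)%R; split; [nra | split; [nra|]].
  intros l l' u Hl Hl' Hu.
  destruct (H1 l l' u Hl Hl' Hu) as [Hf Hf']; destruct (H2 l l' u Hl Hl' Hu) as [Hg Hg'].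
  destruct (H2 l' l' u Hl' Hl' Hu) as [Hg'' _].
  pose proof (Cmod_ge_0 (f l u)); pose proof (Cmod_ge_0 (g l u)); split.
  - rewrite Cmod_mult; nra.
  - replace (f l u * g l u - f l' u * g l' u)
      with (f l u * (g l u - g l' u) + (f l u - f l' u) * g l' u) by ring.
    eapply Rle_trans; [apply Cmod_triangle|]; rewrite !Cmod_mult.
    pose proof (Cmod_ge_0 (g l' u)); pose proof (Cmod_ge_0 (g l u - g l' u)).
    pose proof (Cmod_ge_0 (f l u - f l' u)); pose proof (Cmod_ge_0 (l - l')); nra.
Qed.

Lemma bounded_lipschitz_pow k : bounded_lipschitz_on_unit_disks (fun l _ => l ^ k).
Proof.
  induction k as [|k IH]; simpl; [apply bounded_lipschitz_const|].
  exact (bounded_lipschitz_mul _ _ bounded_lipschitz_param IH).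
Qed.

Lemma quad_iter_rem_lipschitz k : exists K, (0 <= K)%R /\
  forall l l' u, (Cmod l <= 1)%R -> (Cmod l' <= 1)%R -> (Cmod u <= 1)%R ->
    (Cmod (quad_iter_rem k l u - quad_iter_rem k l' u) <= K * Cmod (l - l'))%R.
Proof.
  assert (HV : bounded_lipschitz_on_unit_disks (quad_iter_rem k)).
  { induction k as [|k IH]; simpl; [apply bounded_lipschitz_const|].
    assert (Hk : bounded_lipschitz_on_unit_disks (fun l u => l ^ k + u * quad_iter_rem k l u))
      by (apply bounded_lipschitz_add;
          [apply bounded_lipschitz_pow | exact (bounded_lipschitz_mul _ _ bounded_lipschitz_var IH)]).
    exact (bounded_lipschitz_add _ _ (bounded_lipschitz_mul _ _ bounded_lipschitz_param IH)
                                 (bounded_lipschitz_mul _ _ Hk Hk)). }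
  destruct HV as [M [K [_ [HK H]]]]; exists K; split; [exact HK|].
  intros l l' u Hl Hl' Hu; apply (H l l' u Hl Hl' Hu).
Qed.

End LipschitzInParameter.

Section UnitCircle.
Local Open Scope C_scope.

Definition expi (t : R) : C := (cos t, sin t).

Lemma cexp_mult_Ci (r a : R) : cexp (RtoC r * Ci * RtoC a) = expi (r * a).
Proof.
  unfold cexp, expi, Cmult, RtoC, Ci; simpl.
  replace ((r * 0 - 0 * 1) * a - (r * 1 + 0 * 0) * 0)%R with 0%R by ring.
  replace ((r * 0 - 0 * 1) * 0 + (r * 1 + 0 * 0) * a)%R with (r * a)%R by ring.
  rewrite exp_0, !Rmult_1_l; reflexivity.
Qed.

Lemma expi_add (s t : R) : expi s * expi t = expi (s + t).
Proof. unfold expi, Cmult; simpl; rewrite cos_plus, sin_plus; f_equal; ring. Qed.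

Lemma expi_pow (t : R) n : expi t ^ n = expi (INR n * t).
Proof.
  induction n as [|n IH]; simpl Cpow.
  - rewrite Rmult_0_l; unfold expi; rewrite cos_0, sin_0; reflexivity.
  - rewrite IH, expi_add, S_INR; f_equal; ring.
Qed.

Lemma expi_2PI_INR n : expi (2 * PI * INR n) = 1.
Proof.
  pose proof (cos_period 0 n) as Hc; pose proof (sin_period 0 n) as Hs.
  rewrite Rplus_0_l, cos_0 in Hc; rewrite Rplus_0_l, sin_0 in Hs.
  unfold expi; replace (2 * PI * INR n)%R with (2 * INR n * PI)%R by ring.
  rewrite Hc, Hs; reflexivity.
Qed.

Lemma expi_2PI_IZR k : expi (2 * PI * IZR k) = 1.
Proof.
  destruct (Z_le_gt_dec 0 k) as [Hk|Hk].
  - rewrite <- (Z2Nat.id k Hk), <- INR_IZR_INZ; apply expi_2PI_INR.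
  - replace k with (- Z.of_nat (Z.to_nat (- k)))%Z by lia.
    rewrite opp_IZR, <- INR_IZR_INZ.
    pose proof (expi_2PI_INR (Z.to_nat (- k))) as H; unfold expi, RtoC in *.
    injection H as Hc Hs.
    replace (2 * PI * - INR (Z.to_nat (- k)))%R with (- (2 * PI * INR (Z.to_nat (- k))))%R by ring.
    rewrite cos_neg, sin_neg, Hc, Hs; f_equal; ring.
Qed.

Lemma Cmod_expi (t : R) : Cmod (expi t) = 1%R.
Proof.
  unfold Cmod, expi; simpl; rewrite !Rmult_1_r.
  replace (cos t * cos t + sin t * sin t)%R with 1%R; [apply sqrt_1|].
  pose proof (sin2_cos2 t) as H; unfold Rsqr in H; lra.
Qed.

Lemma cos_sub1_bound (t : R) : (Rabs t <= 1 -> Rabs (cos t - 1) <= t * t / 2)%R.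
Proof.
  intros Ht; apply Rabs_le_between in Ht.
  pose proof (pre_cos_bound t 0) as H; simpl in H.
  replace (cos_approx t 1) with (1 - t * t / 2)%R in H
    by (unfold cos_approx, cos_term; simpl; field).
  pose proof (COS_bound t); destruct H; try lra.
  rewrite Rabs_left1; lra.
Qed.

Lemma sin_sub_id_bound_pos (t : R) : (0 <= t <= 1 -> Rabs (sin t - t) <= t * t)%R.
Proof.
  intros Ht.
  pose proof (pre_sin_bound t 0) as H; simpl in H.
  replace (sin_approx t 1) with (t - t * t * t / 6)%R in H
    by (unfold sin_approx, sin_term; simpl; field).
  replace (sin_approx t 2) with (t - t * t * t / 6 + t * t * t * t * t / 120)%R in H
    by (unfold sin_approx, sin_term; simpl; field).
  destruct H; try lra.
  assert (t * t * t <= t * t)%R by nra; assert (t * t * t * t * t <= t * t * t)%R by nra.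
  apply Rabs_le; nra.
Qed.

Lemma sin_sub_id_bound (t : R) : (Rabs t <= 1 -> Rabs (sin t - t) <= t * t)%R.
Proof.
  intros Ht; apply Rabs_le_between in Ht; destruct (Rle_dec 0 t).
  - apply sin_sub_id_bound_pos; lra.
  - pose proof (sin_sub_id_bound_pos (- t) ltac:(lra)) as H.
    rewrite sin_neg in H; replace (- sin t - - t)%R with (- (sin t - t))%R in H by ring.
    rewrite Rabs_Ropp in H; nra.
Qed.

Lemma expi_taylor1 (t : R) : (Rabs t <= 1)%R -> (Cmod (expi t - 1 - RtoC t * Ci) <= 2 * (t * t))%R.
Proof.
  intros Ht; replace (expi t - 1 - RtoC t * Ci) with ((cos t - 1)%R, (sin t - t)%R)
    by (unfold expi, Cminus, Cplus, Copp, Cmult, RtoC, Ci; simpl; f_equal; ring).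
  eapply Rle_trans; [apply Cmod_le_Rabs_add|].
  pose proof (cos_sub1_bound t Ht); pose proof (sin_sub_id_bound t Ht); nra.
Qed.

Lemma expi_sub1_bound (t : R) : (Rabs t <= 1)%R -> (Cmod (expi t - 1) <= 3 * Rabs t)%R.
Proof.
  intros Ht; replace (expi t - 1) with ((expi t - 1 - RtoC t * Ci) + RtoC t * Ci) by ring.
  eapply Rle_trans; [apply Cmod_triangle|].
  rewrite Cmod_mult, Cmod_R, Cmod_Ci.
  pose proof (expi_taylor1 t Ht); pose proof (Rabs_pos t).
  assert (t * t <= Rabs t)%R by (rewrite <- (Rabs_pos_eq (t * t)), Rabs_mult by nra; nra).
  lra.
Qed.

End UnitCircle.

Section ReturnMap.
Local Open Scope C_scope.
Implicit Types (l z w : C).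

Lemma quad_iter_fixed_point q l z : z <> 0 -> Nat.iter q (quad l) z = z ->
  l ^ q = 1 - z * quad_iter_rem q l z.
Proof.
  intros Hz Hfix; rewrite quad_iterE in Hfix.
  transitivity (/ z * (l ^ q * z + z * z * quad_iter_rem q l z) - z * quad_iter_rem q l z);
    [field | rewrite Hfix; field]; exact Hz.
Qed.

Lemma quad_iter_rescale q l z w : z <> 0 ->
  / z * Nat.iter q (quad l) (z * w) = l ^ q * w + z * w * w * quad_iter_rem q l (z * w).
Proof. intros Hz; rewrite quad_iterE; field; exact Hz. Qed.

(* Used with [q = S n], [L = lam ^ q], [A], [B] the values of [quad_iter_rem q lam] at [z * w] and
   [z], and [c + u * g u] the cofactor of [u ^ n] in [quad_iter_rem q l0 u]; the hypothesis is the
   periodicity of [z].  Each of the four terms on the right is then small. *)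
Lemma quad_return_identity n (z w A B c gz gzw L I : C) : L = 1 - z * B ->
  L * w + z * w * w * A - w - I * w * (1 - w ^ S n)
  = (L - 1 - I) * (w - w ^ S (S n))
    + z * w * w * (A - (z * w) ^ n * (c + z * w * gzw))
    - z * w ^ S (S n) * (B - z ^ n * (c + z * gz))
    + z ^ S (S n) * w ^ S (S n) * (w * gzw - gz).
Proof. intros ->; rewrite Cpow_mult_l, !Cpow_S; ring. Qed.

Lemma rotated_root_of_unity_bounds q l0 (t : R) : (0 < q)%nat -> Cmod l0 = 1%R -> l0 ^ q = 1 ->
  (Rabs (INR q * t) <= 1)%R ->
  Cmod (l0 * expi t) = 1%R /\ (Cmod (l0 * expi t - l0) <= 3 * Rabs t)%R /\
  (Cmod ((l0 * expi t) ^ q - 1 - RtoC (INR q * t) * Ci) <= 2 * (INR q * t) ^ 2)%R.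
Proof.
  intros Hq Hl0 Hl0q Hqt.
  assert (Ht : (Rabs t <= 1)%R).
  { assert (1 <= INR q)%R by (apply (le_INR 1); lia).
    rewrite Rabs_mult, Rabs_pos_eq in Hqt by lra; pose proof (Rabs_pos t); nra. }
  repeat split.
  - rewrite Cmod_mult, Hl0, Cmod_expi; ring.
  - replace (l0 * expi t - l0) with (l0 * (expi t - 1)) by ring.
    rewrite Cmod_mult, Hl0, Rmult_1_l; exact (expi_sub1_bound t Ht).
  - rewrite Cpow_mult_l, Hl0q, Cmult_1_l, expi_pow; simpl pow; rewrite Rmult_1_r.
    exact (expi_taylor1 _ Hqt).
Qed.

Lemma quad_return_estimate q l0 : (0 < q)%nat -> Cmod l0 = 1%R -> l0 ^ q = 1 ->
  (forall m, (0 < m < q)%nat -> l0 ^ m <> 1) ->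
  forall rad : R, (0 <= rad)%R -> exists K : R, (0 <= K)%R /\
  forall (t : R) z w, (Rabs (INR q * t) <= 1)%R -> z <> 0 -> (Cmod z <= 1)%R ->
    (Cmod (z * w) <= 1)%R -> (Cmod w <= rad)%R -> Nat.iter q (quad (l0 * expi t)) z = z ->
    (Cmod (/ z * Nat.iter q (quad (l0 * expi t)) (z * w) - w - RtoC (INR q * t) * Ci * w * (1 - w ^ q))%C
       <= K * (t * t + Cmod z * Rabs t + Cmod z ^ S q))%R.
Proof.
  intros Hq Hl0 Hl0q Hprim rad Hrad; destruct q as [|n]; [lia|].
  assert (Hl0nz : l0 <> 0) by (intros E; rewrite E, Cmod_0 in Hl0; lra).
  destruct (quad_iter_rem_factor (S n) l0 Hl0nz Hl0q Hprim n (Nat.lt_succ_diag_r n)) as [r [Hr Er]].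
  destruct (poly_fun_expand0 r Hr) as [g [Hg Eg]].
  destruct (poly_fun_bounded g 1 Hg) as [Mg [HMg HgM]].
  destruct (quad_iter_rem_lipschitz (S n)) as [LV [HLV HV]].
  set (q := S n); set (rq := (rad ^ S q)%R).
  assert (Hrq : (0 <= rq)%R) by (apply pow_le; exact Hrad).
  set (c1 := (2 * INR q ^ 2 * (rad + rq))%R); set (c2 := (3 * LV * (rad * rad + rq))%R);
    set (c3 := (rq * (rad + 1) * Mg)%R).
  assert (Hc : (0 <= c1 /\ 0 <= c2 /\ 0 <= c3)%R)
    by (pose proof (pow2_ge_0 (INR q)); unfold c1, c2, c3; repeat split; apply Rmult_le_pos; nra).
  exists (c1 + c2 + c3)%R; split; [lra|].
  intros t z w Ht Hz Hz1 Hzw Hw Hfix.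
  destruct (rotated_root_of_unity_bounds q l0 t Hq Hl0 Hl0q Ht) as [Hlam [Hlam_l0 HL]].
  set (lam := l0 * expi t) in *.
  rewrite quad_iter_rescale by exact Hz.
  rewrite (quad_return_identity n z w _ _ (r 0) (g z) (g (z * w)) _ _ (quad_iter_fixed_point _ _ _ Hz Hfix)).
  rewrite <- !Eg, <- !Er; fold q.
  assert (Hwq : (Cmod (w ^ S q) <= rq)%R)
    by (rewrite Cmod_pow; apply pow_incr; pose proof (Cmod_ge_0 w); lra).
  assert (Hdiff : forall u, (Cmod u <= 1)%R ->
    (Cmod (quad_iter_rem q lam u - quad_iter_rem q l0 u) <= 3 * LV * Rabs t)%R).
  { intros u Hu; eapply Rle_trans; [apply HV; lra|]; nra. }
  assert (Hgdiff : (Cmod (w * g (z * w)%C - g z) <= (rad + 1) * Mg)%R).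
  { eapply Rle_trans; [apply Cmod_sub_le|]; rewrite Cmod_mult.
    pose proof (HgM _ Hzw); pose proof (HgM _ Hz1); pose proof (Cmod_ge_0 (g (z * w))); nra. }
  pose proof (Cmod_ge_0 z); pose proof (Rabs_pos t); pose proof (pow_le (Cmod z) (S q) ltac:(lra)).
  eapply Rle_trans; [apply Cmod_triangle|].
  eapply Rle_trans; [apply Rplus_le_compat_r, Cmod_sub_le|].
  eapply Rle_trans; [apply Rplus_le_compat_r, Rplus_le_compat_r, Cmod_triangle|].
  assert (HT1 := Cmod_mult_le _ _ _ _ HL
                   (Rle_trans _ _ _ (Cmod_sub_le w _) (Rplus_le_compat _ _ _ _ Hw Hwq))).
  assert (HT2 := Cmod_mult_le _ _ _ _ (Cmod_mult_le _ _ _ _ (Cmod_mult_le _ _ _ _ (Rle_refl (Cmod z)) Hw) Hw)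
                   (Hdiff _ Hzw)).
  assert (HT3 := Cmod_mult_le _ _ _ _ (Cmod_mult_le _ _ _ _ (Rle_refl (Cmod z)) Hwq) (Hdiff _ Hz1)).
  assert (HT4 := Cmod_mult_le _ _ _ _ (Cmod_mult_le _ _ _ _ (Rle_refl (Cmod (z ^ S q))) Hwq) Hgdiff).
  rewrite Cmod_pow in HT4.
  assert (c1 * (t * t) + c2 * (Cmod z * Rabs t) + c3 * Cmod z ^ S q
          <= (c1 + c2 + c3) * (t * t + Cmod z * Rabs t + Cmod z ^ S q))%R
    by (assert (0 <= t * t)%R by nra; assert (0 <= Cmod z * Rabs t)%R by nra; nra).
  unfold c1, c2, c3 in *; nra.
Qed.

End ReturnMap.

Lemma ex_derive_bounded_near0 (f : C -> C) :
  ex_derive (K := C_AbsRing) (V := C_NormedModule) f (RtoC 0) -> f (RtoC 0) = RtoC 0 ->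
  exists del Cd, 0 < del /\ 0 <= Cd /\ forall d, Cmod d < del -> Cmod (f d) <= Cd * Cmod d.
Proof.
  intros [l [_ Hd]] H0.
  destruct (Hd (RtoC 0) (fun P H => H) (mkposreal 1 Rlt_0_1)) as [e He]; simpl in He.
  exists e, (1 + Cmod l); split; [apply cond_pos | split; [pose proof (Cmod_ge_0 l); lra|]].
  intros d Hdl.
  assert (Hb : @ball (AbsRing_UniformSpace C_AbsRing) (RtoC 0) e d).
  { change (Cmod (Cminus d (RtoC 0)) < e); replace (Cminus d (RtoC 0)) with d by ring; exact Hdl. }
  specialize (He d Hb).
  change (Cmod (Cminus (Cminus (f d) (f (RtoC 0))) (Cmult (Cminus d (RtoC 0)) l))
          <= 1 * Cmod (Cminus d (RtoC 0))) in He.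
  rewrite H0 in He; replace (Cminus d (RtoC 0)) with d in He by ring.
  replace (f d) with (Cplus (Cminus (Cminus (f d) (RtoC 0)) (Cmult d l)) (Cmult d l)) by ring.
  eapply Rle_trans; [apply Cmod_triangle|]; rewrite Cmod_mult; nra.
Qed.

Section Parametrisation.
Local Open Scope C_scope.
Variables (p : Z) (q : nat) (chi : C -> C).
Hypothesis (Hq : (0 < q)%nat).

Lemma Pmap_RtoC (a : R) : Pmap (RtoC a) = quad (expi (2 * PI * a)).
Proof. unfold Pmap, quad; rewrite cexp_mult_Ci; reflexivity. Qed.

Lemma zetaE : zeta p q = expi (2 * PI * (IZR p / INR q)).
Proof. apply cexp_mult_Ci. Qed.

Lemma Cmod_zeta : Cmod (zeta p q) = 1%R.
Proof. rewrite zetaE; apply Cmod_expi. Qed.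

Lemma zeta_pow_q : zeta p q ^ q = 1.
Proof.
  rewrite zetaE, expi_pow.
  replace (INR q * (2 * PI * (IZR p / INR q)))%R with (2 * PI * IZR p)%R
    by (field; apply not_0_INR; lia).
  apply expi_2PI_IZR.
Qed.

Lemma Pmap_rotated (eps : R) : Pmap (RtoC (IZR p / INR q + eps)) = quad (zeta p q * expi (2 * PI * eps)).
Proof. rewrite Pmap_RtoC, zetaE, expi_add; f_equal; f_equal; ring. Qed.

Lemma Qmap_iter (eps : R) (z w : C) n : z <> 0 ->
  Nat.iter n (Qmap p q eps z) w = / z * Nat.iter n (Pmap (RtoC (IZR p / INR q + eps))) (z * w).
Proof.
  intros Hz; induction n as [|n IH]; simpl; [field; exact Hz|].
  rewrite IH; unfold Qmap at 1; f_equal; f_equal; field; exact Hz.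
Qed.

Lemma chi_radius_pos : (0 < chi_radius q)%R.
Proof. apply exp_pos. Qed.

Hypothesis Hchi : is_chi p q chi.

(* Injectivity of [k |-> chi (zeta ^ k * d)] on [0 .. q-1] forces [zeta] to be primitive. *)
Lemma zeta_primitive m : (0 < m < q)%nat -> zeta p q ^ m <> 1.
Proof.
  intros Hm Hzm; destruct Hchi as [_ [_ Hcyc]].
  set (d := RtoC (chi_radius q / 2)).
  assert (Hd : (0 < Cmod d < chi_radius q)%R)
    by (pose proof chi_radius_pos; unfold d; rewrite Cmod_R, Rabs_pos_eq; lra).
  destruct (Hcyc d Hd) as [_ [_ Hinj]].
  assert (m = 0)%nat by (apply (Hinj m 0%nat); try lia; rewrite Hzm; reflexivity); lia.
Qed.

Lemma chi_periodic (d : C) : (0 < Cmod d < chi_radius q)%R ->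
  Nat.iter q (Pmap (RtoC (IZR p / INR q) + d ^ q)) (chi d) = chi d.
Proof.
  intros Hd; destruct Hchi as [_ [_ Hcyc]]; destruct (Hcyc d Hd) as [_ [Hstep _]].
  assert (Horbit : forall k, (k <= q)%nat ->
    Nat.iter k (Pmap (RtoC (IZR p / INR q) + d ^ q)) (chi d) = chi (zeta p q ^ k * d)).
  { induction k as [|k IH]; intros Hk; simpl; [f_equal; ring|].
    rewrite IH by lia; apply Hstep; lia. }
  rewrite Horbit, zeta_pow_q, Cmult_1_l; [reflexivity | lia].
Qed.

End Parametrisation.

(* With [t = 2 PI eps], [|eps| = x ^ q] and [|z| <= Cd * x], the bound of [quad_return_estimate]
   is [O(x * |eps|)]. *)
Lemma return_error_scaling (K Cd x eps zm : R) q : 0 <= K -> 0 <= zm <= Cd * x ->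
  0 < Rabs eps <= x -> x ^ q = Rabs eps ->
  K * ((2 * PI * eps) * (2 * PI * eps) + zm * Rabs (2 * PI * eps) + zm ^ S q) / Rabs eps
  <= K * (4 * PI ^ 2 + 2 * PI * Cd + Cd ^ S q) * x.
Proof.
  intros HK Hzm Heps Hxq.
  pose proof PI_RGT_0 as HPI.
  assert (Hsq : (2 * PI * eps) * (2 * PI * eps) = 4 * PI ^ 2 * Rabs eps * Rabs eps)
    by (pose proof (Rsqr_abs eps) as Hee; unfold Rsqr in Hee;
        transitivity (4 * PI ^ 2 * (eps * eps)); [ring | rewrite Hee; ring]).
  assert (Habs : Rabs (2 * PI * eps) = 2 * PI * Rabs eps)
    by (rewrite Rabs_mult, Rabs_pos_eq by lra; reflexivity).
  assert (Hpow : zm ^ S q <= Cd ^ S q * x * Rabs eps).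
  { rewrite <- Hxq; apply Rle_trans with ((Cd * x) ^ S q); [apply pow_incr; lra|].
    rewrite Rpow_mult_distr; simpl; lra. }
  apply Rle_trans with (K * (4 * PI ^ 2 * x + 2 * PI * Cd * x + Cd ^ S q * x) * Rabs eps / Rabs eps).
  - unfold Rdiv; apply Rmult_le_compat_r; [apply Rlt_le, Rinv_0_lt_compat; lra|].
    rewrite Hsq, Habs, (Rmult_assoc K); apply Rmult_le_compat_l; [exact HK|].
    assert (zm * (2 * PI * Rabs eps) <= Cd * x * (2 * PI * Rabs eps))
      by (apply Rmult_le_compat_r; nra).
    assert (4 * PI ^ 2 * Rabs eps * Rabs eps <= 4 * PI ^ 2 * x * Rabs eps)
      by (apply Rmult_le_compat_r; [|apply Rmult_le_compat_l]; nra).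
    nra.
  - right; field; lra.
Qed.

Lemma Rrem_estimate (p : Z) (q : nat) (chi : C -> C) : (0 < q)%nat -> is_chi p q chi ->
  forall rad, 0 <= rad -> exists Cst del, 0 <= Cst /\ 0 < del /\
  forall eps d w, eps <> 0 -> Cmod d < del -> (d ^ q)%C = RtoC eps -> Cmod w <= rad ->
    Cmod (Rrem p q eps (chi d) w) <= Cst * Cmod d.
Proof.
  intros Hq Hchi rad Hrad.
  destruct (quad_return_estimate q (zeta p q) Hq (Cmod_zeta p q) (zeta_pow_q p q Hq)
              (zeta_primitive p q chi Hq Hchi) rad Hrad) as [K [HK Hest]].
  pose proof Hchi as [Hder [Hchi0 Hcyc]].
  destruct (ex_derive_bounded_near0 chi (Hder _ ltac:(rewrite Cmod_0; apply chi_radius_pos)) Hchi0)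
    as [del [Cd [Hdel [HCd Hchi_lin]]]].
  pose proof PI_RGT_0; pose proof (pos_INR q).
  set (M := 1 + Cd * (rad + 1) + 2 * PI * INR q).
  assert (HM : 1 <= M /\ Cd * (rad + 1) <= M /\ 2 * PI * INR q <= M) by (unfold M; repeat split; nra).
  exists (K * (4 * PI ^ 2 + 2 * PI * Cd + Cd ^ S q)), (Rmin (Rmin del (chi_radius q)) (/ M)).
  split; [pose proof (pow_le Cd (S q) HCd); apply Rmult_le_pos; nra|].
  split; [pose proof (chi_radius_pos q); apply Rmin_glb_lt; [apply Rmin_glb_lt|apply Rinv_0_lt_compat]; lra|].
  intros eps d w Heps Hds Hdq Hw.
  pose proof (Rmin_l (Rmin del (chi_radius q)) (/ M)); pose proof (Rmin_r (Rmin del (chi_radius q)) (/ M)).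
  pose proof (Rmin_l del (chi_radius q)); pose proof (Rmin_r del (chi_radius q)).
  assert (Hdeps : Cmod d ^ q = Rabs eps) by (rewrite <- Cmod_pow, Hdq, Cmod_R; reflexivity).
  assert (Hsmall : forall c, 0 <= c <= M -> c * Cmod d < 1).
  { intros c Hc; apply Rle_lt_trans with (M * Cmod d); [pose proof (Cmod_ge_0 d); nra|].
    apply Rlt_le_trans with (M * / M); [apply Rmult_lt_compat_l; lra | right; field; lra]. }
  pose proof (Cmod_ge_0 d) as Hd0; pose proof (Rabs_pos_lt eps Heps) as Heps0.
  pose proof (Hsmall 1 ltac:(lra)) as Hd1.
  assert (Hepsd : Rabs eps <= Cmod d) by (rewrite <- Hdeps; apply pow_le_self; [split; lra | exact Hq]).
  assert (Hd : 0 < Cmod d < chi_radius q) by lra.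
  assert (Hzd : Cmod (chi d) <= Cd * Cmod d) by (apply Hchi_lin; lra).
  pose proof (chi_periodic p q chi Hq Hchi d Hd) as Hfix.
  rewrite Hdq, <- RtoC_plus, Pmap_rotated in Hfix.
  destruct (Hcyc d Hd) as [Hz0 _]; pose proof (Cmod_ge_0 (chi d)).
  unfold Rrem; rewrite Qmap_iter, Pmap_rotated by exact Hz0.
  replace (RtoC (2 * PI * INR q * eps)) with (RtoC (INR q * (2 * PI * eps))) by (f_equal; ring).
  rewrite Cmod_div, Cmod_R by (intros E; apply RtoC_inj in E; contradiction).
  eapply Rle_trans; [|apply (return_error_scaling K Cd (Cmod d) eps (Cmod (chi d)) q); auto; lra].
  unfold Rdiv; apply Rmult_le_compat_r; [apply Rlt_le, Rinv_0_lt_compat; exact Heps0|].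
  apply Hest; auto.
  - rewrite !Rabs_mult, (Rabs_pos_eq (INR q)), (Rabs_pos_eq 2), (Rabs_pos_eq PI) by lra.
    pose proof (Hsmall (2 * PI * INR q) ltac:(split; nra)); nra.
  - pose proof (Hsmall Cd ltac:(split; nra)); nra.
  - rewrite Cmod_mult; pose proof (Hsmall (Cd * rad) ltac:(split; nra)).
    pose proof (Cmod_ge_0 w); nra.
Qed.

Theorem lemma5 (p : Z) (q : nat) (chi : C -> C) :
  (0 < q)%nat -> Z.gcd p (Z.of_nat q) = 1%Z -> is_chi p q chi ->
  forall rad : R, 0 < rad ->
  forall eta : R, 0 < eta ->
  exists eps0 : R, 0 < eps0 /\
    forall eps : R, eps <> 0 -> Rabs eps < eps0 ->
    forall z : C, cycle_set p q chi (IZR p / INR q + eps) z ->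
    forall w : C, Cmod w <= rad ->
      Cmod (Rrem p q eps z w) < eta.
Proof.
  intros Hq _ Hchi rad Hrad eta Heta.
  destruct (Rrem_estimate p q chi Hq Hchi rad (Rlt_le _ _ Hrad)) as [Cst [del [HCst [Hdel Hbound]]]].
  assert (Hfrac : 0 < eta / (Cst + 1)) by (apply Rdiv_lt_0_compat; lra).
  set (s := Rmin del (eta / (Cst + 1))).
  assert (Hs : 0 < s) by (apply Rmin_glb_lt; lra).
  assert (HsC : Cst * s < eta).
  { apply Rle_lt_trans with (Cst * (eta / (Cst + 1))); [apply Rmult_le_compat_l, Rmin_r; lra|].
    apply Rlt_le_trans with ((Cst + 1) * (eta / (Cst + 1))); [nra | right; field; lra]. }
  exists (s ^ q); split; [apply pow_lt; exact Hs|].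
  intros eps Heps Heps_s z [d [_ [Hdq ->]]] w Hw.
  replace (IZR p / INR q + eps - IZR p / INR q) with eps in Hdq by ring.
  assert (Hds : Cmod d < s).
  { apply (pow_lt_reg_l _ _ q); [apply Cmod_ge_0 | lra|].
    rewrite <- Cmod_pow, Hdq, Cmod_R; exact Heps_s. }
  assert (Hsd : s <= del) by apply Rmin_l.
  eapply Rle_lt_trans; [apply Hbound; auto; lra|].
  apply Rle_lt_trans with (Cst * s); [apply Rmult_le_compat_l; lra | exact HsC].
Qed.
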